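(* Let $G$ be an undirected graph and $n\ge 4$ an even integer. Then $G$ admits a homomorphism to the undirected cycle $C_{n-1}$ on $n-1$ vertices if and only if $G$ admits an orientation that contains no induced subgraph isomorphic to a member of $F_n$.
   Context: Graph homomorphisms are vertex maps sending edges to edges (for digraphs: arcs to arcs). An orientation of an undirected graph $G$ is an oriented graph obtained by choosing exactly one direction for each edge. For $n\ge 3$, $Q_n$ is the oriented path $(q_0,\dots,q_{n-1})$ on $n$ distinct vertices, with exactly one arc between $q_i$ and $q_{i+1}$ for each $i$ and no other arcs, such that: the first two arcs are $q_0\to q_1$ and $q_1\to q_2$; the subpath $(q_1,\dots,q_{n-2})$ is alternating (consecutive arcs have opposite directions); and the last two arcs have the same direction. For even $n\ge4$, $F_n$ denotes the (finite, up to isomorphism) set of surjective homomorphic images of $Q_n$, i.e. the oriented graphs $H$ (no loops, no pair of opposite arcs) for which there is a homomorphism $Q_n\to H$ that is surjective on vertices. *)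

From mathcomp Require Import all_boot.
Set Implicit Arguments. Unset Strict Implicit. Unset Printing Implicit Defensive.

Definition cycle_adj (m : nat) (i j : 'I_m) : bool :=
  (nat_of_ord j == i.+1 %% m) || (nat_of_ord i == j.+1 %% m).

Definition hom_to_cycle (T : finType) (e : rel T) (m : nat) : Prop :=
  exists f : T -> 'I_m, forall x y, e x y -> cycle_adj (f x) (f y).

Definition orientation (T : finType) (e a : rel T) : Prop :=
  (forall x y, a x y -> e x y) /\ (forall x y, e x y -> a x y != a y x).

Definition oriented_graph (k : nat) (h : rel 'I_k) : Prop :=
  (forall x, ~~ h x x) /\ (forall x y, h x y -> ~~ h y x).

(* Q_n: oriented path q_0..q_{n-1} on 'I_n; arc i joins q_i and q_{i+1}
   (0 <= i <= n-2), oriented q_i -> q_{i+1} iff d i = true. *)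
Definition Q_dirs (n : nat) (d : nat -> bool) : Prop :=
  [/\ d 0 = true, d 1 = true,
      (* the subpath (q_1, ..., q_{n-2}) (arcs 1 .. n-3) is alternating *)
      (forall i, 1 <= i -> i.+2 <= n - 2 -> d i.+1 = ~~ d i)
    &
      d (n - 3) = d (n - 2)].

Definition Q_arc (n : nat) (d : nat -> bool) (u v : 'I_n) : bool :=
  ((nat_of_ord v == u.+1) && d u) || ((nat_of_ord u == v.+1) && ~~ d v).
Arguments Q_arc n d u v : clear implicits.

(* Membership in F_n (up to isomorphism, a member on vertex set 'I_k):
   an oriented graph that is the image of Q_n under a vertex-surjective
   homomorphism. *)
Definition in_F (n k : nat) (h : rel 'I_k) : Prop :=
  oriented_graph h /\
  exists d : nat -> bool, Q_dirs n d /\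
  exists f : 'I_n -> 'I_k,
    (forall u v : 'I_n, Q_arc n d u v -> h (f u) (f v)) /\
    (forall y : 'I_k, exists x, f x = y).

Definition has_induced_copy (T : finType) (a : rel T) (k : nat) (h : rel 'I_k) : Prop :=
  exists g : 'I_k -> T, injective g /\ forall u v, h u v = a (g u) (g v).

From mathcomp Require Import all_boot zify.
Set Implicit Arguments. Unset Strict Implicit. Unset Printing Implicit Defensive.

(* The homomorphic images of Q_n in an oriented graph are exactly its induced
   subgraphs belonging to F_n, so the right-hand side says that some
   orientation of G admits no homomorphism from Q_n.
   Given f : G -> C_(n-1), pull back the orientation
   0 -> 1 -> 2 <- 3 -> 4 <- ... <- n-3 -> n-2 <- 0 of C_(n-1). Its only
   directed 2-path is 0 -> 1 -> 2, with which an image of Q_n would have to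
   start and end; in between, the even vertices of the alternating part climb
   at most two colours per step and cannot get back to a neighbour of 0 in time.
   Conversely, an orientation without Q_n has no directed 3-path, so every
   vertex is a source, a sink or the middle of a directed 2-path. Colour the
   middles 1, the starts of 2-paths 0, and the other sinks and sources by their
   zigzag distance, truncated at (n-4)/2, from the ends of 2-paths (sinks even,
   sources odd). A sink adjacent to the start w of a 2-path is at maximal
   distance, since otherwise a 2-path, the zigzag and the 2-path from w would
   form an image of Q_n; this closes up the cycle. *)

Definition zigzag_arc (T : Type) (a : rel T) (p : nat -> T) (i : nat) : bool :=
  if odd i then a (p i) (p i.+1) else a (p i.+1) (p i).

Lemma zigzag_arc_odd (T : Type) (a : rel T) p i :
  odd i -> zigzag_arc a p i = a (p i) (p i.+1).
Proof. by rewrite /zigzag_arc => ->. Qed.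

Lemma zigzag_arc_even (T : Type) (a : rel T) p i :
  ~~ odd i -> zigzag_arc a p i = a (p i.+1) (p i).
Proof. by rewrite /zigzag_arc => /negbTE ->. Qed.

Lemma eq_zigzag_arc (T : Type) (a : rel T) p q i :
  p i = q i -> p i.+1 = q i.+1 -> zigzag_arc a p i = zigzag_arc a q i.
Proof. by rewrite /zigzag_arc => -> ->. Qed.

(* [phi] maps Q_n into [a]: q_0 -> q_1, the alternating path
   q_1 -> q_2 <- q_3 -> ... -> q_(n-2), and q_(n-2) -> q_(n-1). *)
Definition Q_walk (T : Type) (a : rel T) (n : nat) (phi : nat -> T) : Prop :=
  [/\ a (phi 0) (phi 1), forall i, 0 < i < n - 2 -> zigzag_arc a phi i
    & a (phi (n - 2)) (phi (n - 1))].

Lemma Q_walk_map (T S : Type) (a : rel T) (b : rel S) (f : T -> S) n phi :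
  (forall x y, a x y -> b (f x) (f y)) -> Q_walk a n phi -> Q_walk b n (f \o phi).
Proof.
move=> ab [arc0 zig arc_end]; split=> [|i /zig|]; rewrite ?ab //.
by rewrite /zigzag_arc; case: ifP => _; apply: ab.
Qed.

Definition Q_dir (n i : nat) : bool := [|| i == 0, odd i | i == n - 2].

(* For [P] monotone in [j], the least [j] with [P j], truncated at [K]. *)
Definition count_fail (K : nat) (P : pred nat) : nat := count (predC P) (iota 0 K).

Lemma count_fail_le K P : count_fail K P <= K.
Proof. by rewrite /count_fail (leq_trans (count_size _ _)) ?size_iota. Qed.

Lemma count_fail_antimono K (P Q : pred nat) :
  (forall j, P j -> Q j) -> count_fail K Q <= count_fail K P.
Proof. by move=> PQ; apply: sub_count => j /=; apply: contra; apply: PQ. Qed.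

Lemma count_fail_predT K (P : pred nat) : (forall j, P j) -> count_fail K P = 0.
Proof.
move=> allP; rewrite /count_fail (@eq_count _ _ pred0) ?count_pred0 //.
by move=> j /=; rewrite allP.
Qed.

Lemma count_fail_pred0 K (P : pred nat) :
  (forall j, j < K -> ~~ P j) -> count_fail K P = K.
Proof.
move=> noP; rewrite /count_fail -[RHS](size_iota 0 K) -count_predT.
by apply: eq_in_count => j; rewrite mem_iota /= => /noP.
Qed.

Lemma count_fail_shift K (P Q : pred nat) :
  (forall j, Q j -> P j.+1) -> count_fail K P <= (count_fail K Q).+1.
Proof.
move=> QP; case: K => [//|K].
have shift : count (predC P) (iota 1 K) <= count (predC Q) (iota 0 K).
  rewrite (iotaDl 1 0) count_map; apply: sub_count => j /=; apply: contra; exact: QP.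
have widen : count (predC Q) (iota 0 K) <= count (predC Q) (iota 0 K.+1).
  by rewrite -addn1 iotaD count_cat leq_addr.
rewrite /count_fail; set c := count (predC Q) (iota 0 K.+1) in widen *.
by rewrite /=; case: (P 0); lia.
Qed.

Lemma cycle_adj_nat m i j : i < m -> j < m ->
  (j == i.+1 %% m) || (i == j.+1 %% m) =
  [|| j == i.+1, i == j.+1, (i == m.-1) && (j == 0) | (j == m.-1) && (i == 0)].
Proof.
move=> lti ltj.
have mod_succ k : k < m -> k.+1 %% m = if k.+1 == m then 0 else k.+1.
  by move=> ltk; case: eqP => [->|ne]; [exact: modnn | rewrite modn_small; lia].
rewrite !mod_succ //.
by have [e1|ne1] := eqVneq i.+1 m; have [e2|ne2] := eqVneq j.+1 m; lia.
Qed.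

Lemma cycle_adj_sym m (i j : 'I_m) : cycle_adj i j = cycle_adj j i.
Proof. by rewrite /cycle_adj orbC. Qed.

Lemma orientation_asym (T : finType) (e a : rel T) :
  orientation e a -> forall x y, a x y -> ~~ a y x.
Proof. by move=> [a_e a_or] x y a_xy; move: (a_or x y (a_e x y a_xy)); rewrite a_xy. Qed.

Lemma orientation_arc (T : finType) (e a : rel T) x y :
  orientation e a -> e x y -> a x y || a y x.
Proof. by move=> [_ a_or] /a_or; case: (a x y); case: (a y x). Qed.

(* The orientation 0 -> 1 -> 2 <- 3 -> 4 <- ... <- m-2 -> m-1 <- 0 of C_m, m odd. *)
Definition cycle_arc (m i j : nat) : bool :=
  [|| (i == 0) && (j == 1), (i == 1) && (j == 2), (i == 0) && (j == m.-1)
    | [&& 2 < i, odd i & (j == i.+1) || (j == i.-1)]].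

Section OrientedCycle.

Variable m : nat.
Hypotheses (m_odd : odd m) (m_ge3 : 3 <= m).

Lemma cycle_arc_orients i :
  i < m -> cycle_arc m i (i.+1 %% m) != cycle_arc m (i.+1 %% m) i.
Proof.
move=> ltim; have [lti1m|eqi1m] : i.+1 < m \/ i.+1 = m by lia.
  by rewrite modn_small // /cycle_arc; lia.
by rewrite eqi1m modnn /cycle_arc; lia.
Qed.

Lemma cycle_arc_dipath2 i j l :
  cycle_arc m i j -> cycle_arc m j l -> [/\ i = 0, j = 1 & l = 2].
Proof.
rewrite /cycle_arc => arc_ij arc_jl.
have /and3P[/eqP -> /eqP -> /eqP ->] : [&& i == 0, j == 1 & l == 2] by lia.
by [].
Qed.

Lemma cycle_arc_zigzag s j l : ~~ odd s -> 2 <= s -> s < m.-1 ->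
  cycle_arc m j s -> cycle_arc m j l -> [&& ~~ odd l, 2 <= l & l <= s.+2].
Proof. by rewrite /cycle_arc; lia. Qed.

End OrientedCycle.

Section Dipath2.

Variables (T : finType) (a : rel T).

Definition has_in x := [exists y, a y x].
Definition has_out x := [exists y, a x y].
Definition dipath2_mid x := has_in x && has_out x.
Definition dipath2_src x := [exists y, a x y && dipath2_mid y].
Definition dipath2_snk x := [exists y, a y x && dipath2_mid y].

(* [x] is the last vertex of a zigzag x_0 <- z_1 -> x_1 <- ... <- z_k -> x,
   k <= j, starting at the end x_0 of a directed 2-path. *)
Fixpoint zigzag_reach j x :=
  if j is j'.+1 then
    zigzag_reach j' x || [exists x', exists z, [&& a z x', a z x & zigzag_reach j' x']]
  else dipath2_snk x.

Lemma zigzag_reach_snk x j : dipath2_snk x -> zigzag_reach j x.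
Proof. by move=> snk_x; elim: j => //= j ->. Qed.

(* The 2-path followed by the zigzag, padded to exactly [N] steps: an initial
   segment of a Q_n-shaped walk. *)
Lemma zigzag_of_reach j x : zigzag_reach j x -> forall N, j <= N ->
  exists p : nat -> T, [/\ a (p 0) (p 1), forall i, 0 < i < N.*2.+2 -> zigzag_arc a p i
                        & p N.*2.+2 = x].
Proof.
elim: j x => [|j IH] x /=.
  move=> /existsP[y /andP[a_yx /andP[/existsP[b a_by] _]]] N _.
  exists (fun i => if i == 0 then b else if odd i then y else x).
  split=> [//| [//|i] _ | ]; last by rewrite /= odd_double.
  by rewrite /zigzag_arc /=; case: (odd i).
case/orP=> [reach_x N le_jN|]; first by apply: IH reach_x _ _; lia.
case/existsP=> x' /existsP[z /and3P[a_zx' a_zx reach_x']] [//|N] le_jN.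
have [p [p_first zig p_last]] := IH x' reach_x' N le_jN.
pose q i := if i <= N.*2.+2 then p i else if i == N.*2.+3 then z else x.
have q_p i : i <= N.*2.+2 -> q i = p i by move=> le_i; rewrite /q le_i.
exists q; split; first by rewrite !q_p.
- move=> i; rewrite doubleS => /andP[i_gt0 lti].
  have [lt_iN|le_Ni] := ltnP i N.*2.+2.
    by rewrite (@eq_zigzag_arc _ _ q p); [apply: zig | apply: q_p | apply: q_p]; lia.
  have [->|->] : i = N.*2.+2 \/ i = N.*2.+3 by lia.
    rewrite zigzag_arc_even /= ?odd_double // [q N.*2.+2]q_p // p_last.
    by rewrite /q ifN ?eqxx //; lia.
  by rewrite zigzag_arc_odd /= ?odd_double // /q ltnn eqxx /= !ifN //; lia.
by rewrite /q doubleS !ifN //; lia.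
Qed.

End Dipath2.

Section QPath.

Variable n : nat.
Hypotheses (n_ge4 : 4 <= n) (n_even : ~~ odd n).

Lemma Q_dirs_dir : Q_dirs n (Q_dir n).
Proof. by split=> [||i|]; rewrite /Q_dir; lia. Qed.

Lemma Q_dir_unique d : Q_dirs n d -> forall i, i < n - 1 -> d i = Q_dir n i.
Proof.
move=> [d0 d1 d_alt d_last].
have d_odd i : 1 <= i -> i <= n - 3 -> d i = odd i.
  elim: i => [//|[|i] IH] i_ge1 i_le; first by rewrite d1.
  by rewrite d_alt ?IH //=; lia.
move=> i lti; rewrite /Q_dir.
have [->|ne_i] := eqVneq i (n - 2).
  by rewrite -d_last d_odd ?eqxx ?orbT //; lia.
case: i lti ne_i => [|i] lti ne_i; first by rewrite d0.
by rewrite d_odd ?(negbTE ne_i) ?orbF //; lia.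
Qed.

Lemma Q_walk_dirP (T : Type) (a : rel T) phi :
  Q_walk a n phi <->
  forall i, i < n - 1 -> if Q_dir n i then a (phi i) (phi i.+1) else a (phi i.+1) (phi i).
Proof.
have dir_mid i : 0 < i < n - 2 -> Q_dir n i = odd i by rewrite /Q_dir; lia.
have n2S : (n - 2).+1 = n - 1 by lia.
split=> [[arc0 zig arc_end] i lti | walk].
  have [->|[i_mid|->]] : i = 0 \/ 0 < i < n - 2 \/ i = n - 2 by lia.
  - exact: arc0.
  - by rewrite dir_mid //; move: (zig i i_mid); rewrite /zigzag_arc.
  - by rewrite /Q_dir eqxx !orbT n2S.
split; first exact: (walk 0 ltac:(lia)).
  by move=> i i_mid; move: (walk i ltac:(lia)); rewrite dir_mid.
by move: (walk (n - 2) ltac:(lia)); rewrite /Q_dir eqxx !orbT n2S.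
Qed.

Lemma Q_walk_of_induced_copy (T : finType) (a : rel T) k (h : rel 'I_k) :
  in_F n h -> has_induced_copy a h -> exists phi, Q_walk a n phi.
Proof.
move=> [_ [d [dirs_d [f [f_hom _]]]]] [g [_ g_ind]].
have n_gt0 : 0 < n by lia.
pose q i : 'I_n := insubd (Ordinal n_gt0) i.
exists (fun i => g (f (q i))); apply/Q_walk_dirP => i lti.
have [q_i q_i1] : val (q i) = i /\ val (q i.+1) = i.+1.
  by rewrite !val_insubd !ifT //; lia.
rewrite -(Q_dir_unique dirs_d lti) -!g_ind.
by case d_i: (d i); apply: f_hom; rewrite /Q_arc q_i q_i1 eqxx d_i ?orbT.
Qed.

Lemma induced_copy_of_Q_walk (T : finType) (a : rel T) :
  (forall x y, a x y -> ~~ a y x) -> (exists phi, Q_walk a n phi) ->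
  exists k (h : rel 'I_k), in_F n h /\ has_induced_copy a h.
Proof.
move=> a_asym [phi /Q_walk_dirP walk].
pose s := undup [seq phi i | i <- iota 0 n].
have phi_in_s i : i < n -> phi i \in s.
  by move=> lti; rewrite mem_undup; apply: map_f; rewrite mem_iota.
pose g (u : 'I_(size s)) := nth (phi 0) s u.
have index_lt (u : 'I_n) : index (phi u) s < size s by rewrite index_mem phi_in_s.
pose f (u : 'I_n) : 'I_(size s) := Ordinal (index_lt u).
have gf u : g (f u) = phi u by rewrite /g nth_index ?phi_in_s.
exists (size s), (fun u v => a (g u) (g v)); split; last first.
  exists g; split=> // u v /eqP.
  by rewrite /g nth_uniq ?undup_uniq // => /eqP; apply: val_inj.
split.
  split=> [x|x y]; last exact: a_asym.
  by apply/negP=> axx; move/a_asym: (axx); rewrite axx.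
exists (Q_dir n); split; first exact: Q_dirs_dir.
exists f; split.
  move=> u v; rewrite !gf /Q_arc; have ltu := ltn_ord u; have ltv := ltn_ord v.
  case/orP=> /andP[/eqP eq_uv dir]; [move: (walk u) | move: (walk v)];
    by rewrite eq_uv ?dir ?(negbTE dir); apply; lia.
move=> y; have : g y \in s by rewrite /g mem_nth.
rewrite mem_undup => /mapP [i]; rewrite mem_iota /= => lti gy.
exists (Ordinal lti); apply: val_inj => /=.
by rewrite -gy /g index_uniq ?undup_uniq.
Qed.

Lemma Q_walk_of_dipath3 (T : Type) (a : rel T) x0 x1 x2 x3 :
  a x0 x1 -> a x1 x2 -> a x2 x3 ->
  Q_walk a n (fun i => if i == 0 then x0 else if i == n - 1 then x3
                       else if odd i then x1 else x2).
Proof.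
move=> a01 a12 a23; set phi := fun i => _.
have phi_mid i : 0 < i < n - 1 -> phi i = if odd i then x1 else x2.
  by move=> i_mid; rewrite /phi; case: eqP => [|_]; [lia | case: eqP => [|_] //; lia].
have phi_last : phi (n - 1) = x3 by rewrite /phi; case: eqP => [|_]; [lia | rewrite eqxx].
split; first by rewrite (phi_mid 1) //; lia.
  by move=> i i_mid; rewrite /zigzag_arc !phi_mid /=; [case: (odd i) | lia..].
rewrite phi_last phi_mid; last by lia.
by rewrite (_ : odd (n - 2) = false) //; lia.
Qed.

Lemma no_Q_walk_cycle_arc psi : ~ Q_walk (cycle_arc (n - 1)) n psi.
Proof.
move=> [arc0 zig arc_end]; have m_odd : odd (n - 1) by lia.
have m_ge3 : 3 <= n - 1 by lia.
have [_ psi1 psi2] := cycle_arc_dipath2 m_odd m_ge3 arc0 (zig 1 ltac:(lia)).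
have arc_n3 : cycle_arc (n - 1) (psi (n - 3)) (psi (n - 2)).
  have n3S : (n - 3).+1 = n - 2 by lia.
  have := zig (n - 3) ltac:(lia); rewrite zigzag_arc_odd; last by lia.
  by rewrite n3S.
have [psi_n3 _ _] := cycle_arc_dipath2 m_odd m_ge3 arc_n3 arc_end.
have climb k : k.*2.+2 <= n - 4 ->
    [&& ~~ odd (psi k.*2.+2), 2 <= psi k.*2.+2 & psi k.*2.+2 <= k.*2.+2].
  elim: k => [|k IH] le_k; first by rewrite psi2.
  have /and3P[even_s s_ge2 s_le] := IH ltac:(lia).
  have := zig k.*2.+2 ltac:(lia); rewrite zigzag_arc_even; last lia; move=> arc_b.
  have := zig k.*2.+3 ltac:(lia); rewrite zigzag_arc_odd; last lia; move=> arc_f.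
  have /and3P[] := cycle_arc_zigzag m_odd m_ge3 even_s s_ge2 ltac:(lia) arc_b arc_f.
  by rewrite doubleS; lia.
have [n4|n_ge6] : n = 4 \/ 6 <= n by lia.
  by move: psi_n3; rewrite n4 psi1.
have /and3P[] := climb (n./2 - 3) ltac:(lia).
rewrite (_ : (n./2 - 3).*2.+2 = n - 4); last by lia.
have n4S : (n - 4).+1 = n - 3 by lia.
have := zig (n - 4) ltac:(lia); rewrite zigzag_arc_even; last lia.
by rewrite n4S psi_n3 /cycle_arc; lia.
Qed.

Lemma Q_walk_free_orientation (T : finType) (e : rel T) :
  symmetric e -> hom_to_cycle e (n - 1) ->
  exists a : rel T, orientation e a /\ ~ exists phi, Q_walk a n phi.
Proof.
move=> e_sym [f f_hom]; have m_odd : odd (n - 1) by lia.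
have m_ge3 : 3 <= n - 1 by lia.
exists (fun x y => e x y && cycle_arc (n - 1) (f x) (f y)); split.
  split=> [x y /andP[] //|x y e_xy]; rewrite e_xy -e_sym e_xy /=.
  have orients (u : 'I_(n - 1)) := cycle_arc_orients m_odd m_ge3 (ltn_ord u).
  by case/orP: (f_hom x y e_xy) => /eqP ->;
    [exact: (orients (f x)) | rewrite eq_sym; exact: (orients (f y))].
move=> [phi walk]; apply: (@no_Q_walk_cycle_arc ((fun x => val (f x)) \o phi)).
by apply: Q_walk_map walk => x y /andP[].
Qed.

Section Coloring.

Variables (T : finType) (a : rel T).
Hypothesis Q_walk_free : ~ exists phi, Q_walk a n phi.

Local Notation K := (n./2 - 2).

Lemma no_dipath3 x0 x1 x2 x3 : a x0 x1 -> a x1 x2 -> a x2 x3 -> False.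
Proof.
by move=> a01 a12 a23; apply: Q_walk_free; eexists; apply: Q_walk_of_dipath3 a01 a12 a23.
Qed.

Lemma has_in_not_src y : has_in a y -> ~~ dipath2_src a y.
Proof.
case/existsP=> x a_xy; apply/negP=> /existsP[z /andP[a_yz /andP[_ /existsP[u a_zu]]]].
exact: no_dipath3 a_xy a_yz a_zu.
Qed.

Lemma dipath2_src_far w x j : dipath2_src a w -> a w x -> j < K -> ~~ zigzag_reach a j x.
Proof.
move=> /existsP[y0 /andP[a_wy0 /andP[_ /existsP[y1 a_y0y1]]]] a_wx lt_jK.
apply/negP=> /zigzag_of_reach/(_ (n./2 - 3) ltac:(lia)) [p [p_first zig p_last]].
have N2 : (n./2 - 3).*2.+2 = n - 4 by lia.
rewrite N2 in zig p_last.
pose phi i := if i <= n - 4 then p i else if i == n - 3 then w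
              else if i == n - 2 then y0 else y1.
have phi_p i : i <= n - 4 -> phi i = p i by move=> le_i; rewrite /phi le_i.
have [phi_n4 phi_n3 phi_n2 phi_n1] :
    [/\ phi (n - 4) = x, phi (n - 3) = w, phi (n - 2) = y0 & phi (n - 1) = y1].
  by rewrite /phi; split; repeat case: ifP => ?; first [done | lia].
have [n4S n3S] : (n - 4).+1 = n - 3 /\ (n - 3).+1 = n - 2 by lia.
apply: Q_walk_free; exists phi; split; last by rewrite phi_n2 phi_n1.
  by rewrite !phi_p //; lia.
move=> i /andP[i_gt0 lti]; have [lt_i4|ge_i4] := ltnP i (n - 4).
  by rewrite (@eq_zigzag_arc _ _ phi p); [apply: zig | apply: phi_p | apply: phi_p]; lia.
have [->|->] : i = n - 4 \/ i = n - 3 by lia.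
  by rewrite zigzag_arc_even ?n4S ?phi_n3 ?phi_n4 //; lia.
by rewrite zigzag_arc_odd ?n3S ?phi_n3 ?phi_n2 //; lia.
Qed.

Definition level x := count_fail K (fun j => zigzag_reach a j x).
Definition out_level x := count_fail K (fun j => [exists y, a x y && zigzag_reach a j y]).

(* Colours in C_(n-1) = C_(2K+3): sinks at zigzag distance d get 2d + 2, other
   sources get 2d + 3 with d the least distance of an out-neighbour, where
   2K + 3 wraps around to 0. *)
Definition color x :=
  if dipath2_mid a x then 1 else if dipath2_src a x then 0
  else if has_in a x then (level x).*2.+2
  else if out_level x == K then 0 else (out_level x).*2.+3.

Lemma level_snk y : dipath2_snk a y -> level y = 0.
Proof. by move=> snk_y; apply: count_fail_predT => j; apply: zigzag_reach_snk. Qed.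

Lemma level_far w y : dipath2_src a w -> a w y -> level y = K.
Proof.
by move=> src_w a_wy; apply: count_fail_pred0 => j; apply: dipath2_src_far src_w a_wy.
Qed.

Lemma level_out x y : a x y -> out_level x <= level y <= (out_level x).+1.
Proof.
move=> a_xy; apply/andP; split.
  by apply: count_fail_antimono => j reach_y; apply/existsP; exists y; rewrite a_xy.
apply: count_fail_shift => j /existsP[y' /andP[a_xy' reach_y']] /=.
apply/orP; right; apply/existsP; exists y'.
by apply/existsP; exists x; rewrite a_xy' a_xy.
Qed.

Lemma color_lt x : color x < n - 1.
Proof.
have := count_fail_le K (fun j => zigzag_reach a j x).
have := count_fail_le K (fun j => [exists y, a x y && zigzag_reach a j y]).
by rewrite /color /level /out_level; repeat case: ifP => ?; lia.
Qed.

Lemma color_arc x y : a x y ->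
  [|| color y == (color x).+1, color x == (color y).+1,
      (color x == n - 2) && (color y == 0) | (color y == n - 2) && (color x == 0)].
Proof.
move=> a_xy; have in_y : has_in a y by apply/existsP; exists x.
rewrite /color (negbTE (has_in_not_src in_y)) in_y.
have [mid_x|not_mid_x] := boolP (dipath2_mid a x).
  have snk_y : dipath2_snk a y by apply/existsP; exists x; rewrite a_xy.
  have not_mid_y : ~~ dipath2_mid a y.
    apply/negP=> /andP[_ /existsP[z a_yz]]; case/andP: mid_x => /existsP[u a_ux] _.
    exact: no_dipath3 a_ux a_xy a_yz.
  by rewrite (negbTE not_mid_y) level_snk.
have [src_x|not_src_x] := boolP (dipath2_src a x).
  by case: ifP => // _; rewrite (level_far src_x a_xy); lia.
have not_in_x : ~~ has_in a x.
  by apply: contra not_mid_x => in_x; rewrite /dipath2_mid in_x; apply/existsP; exists y.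
have not_mid_y : ~~ dipath2_mid a y.
  by apply: contra not_src_x => mid_y; apply/existsP; exists y; rewrite a_xy.
rewrite (negbTE not_in_x) (negbTE not_mid_y).
have := level_out a_xy; have := count_fail_le K (fun j => zigzag_reach a j y).
by rewrite /level; case: (eqVneq (out_level x) K); lia.
Qed.

Lemma Q_walk_free_hom :
  exists f : T -> 'I_(n - 1), forall x y, a x y -> cycle_adj (f x) (f y).
Proof.
have n1_gt0 : 0 < n - 1 by lia.
exists (fun x => insubd (Ordinal n1_gt0) (color x)) => x y a_xy.
rewrite /cycle_adj !val_insubd !color_lt cycle_adj_nat ?color_lt //.
by have := color_arc a_xy; lia.
Qed.

End Coloring.

End QPath.

Theorem mainTheorem11 (T : finType) (e : rel T)
  (e_sym : symmetric e) (e_irr : irreflexive e)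
  (n : nat) (hn4 : 4 <= n) (hn_even : ~~ odd n) :
  hom_to_cycle e (n - 1) <->
  exists a : rel T, orientation e a /\
    ~ (exists (k : nat) (h : rel 'I_k), in_F n h /\ has_induced_copy a h).
Proof.
split=> [/(Q_walk_free_orientation hn4 hn_even e_sym) [a [a_or no_walk]]
        | [a [a_or no_copy]]].
  exists a; split=> // -[k [h [h_F h_copy]]].
  by apply: no_walk; exact (Q_walk_of_induced_copy hn4 hn_even h_F h_copy).
have no_walk : ~ exists phi, Q_walk a n phi.
  move=> walk; apply: no_copy.
  exact (induced_copy_of_Q_walk hn4 hn_even (orientation_asym a_or) walk).
have [f f_hom] := Q_walk_free_hom hn4 hn_even no_walk.
exists f => x y /(orientation_arc a_or) /orP[/f_hom // | /f_hom].
by rewrite cycle_adj_sym.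
Qed.
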